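(* (i) If $X',X''\in\lambda\mathrm{Der}(\mathcal{B})[[\lambda]]$ both satisfy $\exp(X')\phi_0'(\mathcal{A}'[[\lambda]])\subseteq C$ and $\exp(X'')\phi_0'(\mathcal{A}'[[\lambda]])\subseteq C$, then there is $\xi\in\lambda\mathrm{Der}(\mathcal{A}')[[\lambda]]$ with $\exp(X')\phi_0'=(\exp(X'')\phi_0')\circ\exp(\xi)$. (ii) If $\pi'$ (resp. $\pi''$) is the unique Poisson structure on $\mathcal{A}'[[\lambda]]$ making $\exp(X')\phi_0'$ (resp. $\exp(X'')\phi_0'$) a Poisson morphism into $(\mathcal{B}[[\lambda]],\sigma)$, then $\pi'$ and $\pi''$ are equivalent, i.e. $\pi''=\exp(\eta)\pi'$ for some $\eta\in\lambda\mathrm{Der}(\mathcal{A}')[[\lambda]]$ (so the equivalence class of $\pi'$ does not depend on the choice of $X'$).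
   Context: $\mathbb{K}$ is a field of characteristic zero. $\mathcal{A},\mathcal{B}$ are commutative $\mathbb{K}$-algebras with Poisson brackets $\pi_0=\{\cdot,\cdot\}_{\mathcal{A}}$, $\sigma_0=\{\cdot,\cdot\}_{\mathcal{B}}$, and $\phi_0:\mathcal{A}\to\mathcal{B}$ is a Poisson morphism. $\pi,\sigma$ are formal Poisson deformations of $\pi_0,\sigma_0$ ($\mathbb{K}[[\lambda]]$-bilinear Poisson brackets on $\mathcal{A}[[\lambda]]$, $\mathcal{B}[[\lambda]]$ with zeroth-order terms $\pi_0,\sigma_0$), and $\Phi:(\mathcal{A}[[\lambda]],\pi)\to(\mathcal{B}[[\lambda]],\sigma)$ is a $\mathbb{K}[[\lambda]]$-linear Poisson morphism with zeroth-order term $\phi_0$. $\mathcal{A}'$ is the Poisson commutant of $\phi_0(\mathcal{A})$ in $(\mathcal{B},\sigma_0)$, with induced bracket, and $\phi_0'$ is the inclusion $\mathcal{A}'\to\mathcal{B}$ extended $\lambda$-linearly. $C$ is the commutant of $\Phi(\mathcal{A}[[\lambda]])$ in $(\mathcal{B}[[\lambda]],\sigma)$. For such $X'$, the map $\exp(X')\phi_0':\mathcal{A}'[[\lambda]]\to C$ is a ring isomorphism and there is a unique Poisson structure on $\mathcal{A}'[[\lambda]]$ making it a Poisson morphism into $(\mathcal{B}[[\lambda]],\sigma)$. Exponentials of derivations are $\exp(X)=\sum_nX^n/n!$. *)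

(* Formal power series in lambda with coefficients in a
   K-module U are represented as sequences  nat -> U  (component n = coefficient
   of lambda^n).  K[[lambda]]-(bi)linear maps are represented, as usual in
   deformation theory, by formal series of K-(bi)linear maps acting by Cauchy
   convolution. *)
From HB Require Import structures.
From mathcomp Require Import all_boot all_order all_algebra.
Set Implicit Arguments. Unset Strict Implicit. Unset Printing Implicit Defensive.
Import Order.TTheory GRing.Theory Num.Theory.
Local Open Scope ring_scope.

Section FPS.
Variable K : fieldType.

Definition smul (R : pzRingType) (a b : nat -> R) : nat -> R :=
  fun n => \sum_(i < n.+1) a i * b (n - i)%N.

Definition sone (R : pzRingType) : nat -> R := fun n => if n == 0%N then 1 else 0.

Definition sapply (U V : lmodType K) (f : nat -> U -> V) (a : nat -> U) : nat -> V :=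
  fun n => \sum_(i < n.+1) f i (a (n - i)%N).

Definition sbr (U : lmodType K) (p : nat -> U -> U -> U) (a b : nat -> U) : nat -> U :=
  fun n => \sum_(i < n.+1) \sum_(j < (n - i).+1) p i (a j) (b (n - i - j)%N).

Definition scomp (U V W : lmodType K) (f : nat -> V -> W) (g : nat -> U -> V)
  : nat -> U -> W :=
  fun n x => \sum_(i < n.+1) f i (g (n - i)%N x).

Definition sid (U : lmodType K) : nat -> U -> U :=
  fun n x => if n == 0%N then x else 0.

Fixpoint spow (U : lmodType K) (X : nat -> U -> U) (m : nat) : nat -> U -> U :=
  match m with
  | 0%N => sid (U := U)
  | m'.+1 => scomp X (spow X m')
  end.

(* exp(X) = sum_m X^m / m!  ; for X in lambda*(...)[[lambda]] the coefficient of
   lambda^n only involves m <= n *)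
Definition sexp (U : lmodType K) (X : nat -> U -> U) : nat -> U -> U :=
  fun n x => \sum_(m < n.+1) ((m`!)%:R : K)^-1 *: spow X m n x.

Definition ser_in (U : Type) (P : U -> Prop) (a : nat -> U) : Prop :=
  forall n, P (a n).

Definition lin_on (U V : lmodType K) (P : U -> Prop) (f : U -> V) : Prop :=
  forall (c : K) x y, P x -> P y -> f (c *: x + y) = c *: f x + f y.

Definition bilin_on (U : lmodType K) (P : U -> Prop) (p : U -> U -> U) : Prop :=
  (forall x y, P x -> P y -> P (p x y)) /\
  (forall (c : K) x y z, P x -> P y -> P z -> p (c *: x + y) z = c *: p x z + p y z) /\
  (forall (c : K) x y z, P x -> P y -> P z -> p z (c *: x + y) = c *: p z x + p z y).

Definition poisson_on (R : comAlgType K) (P : R -> Prop) (p : R -> R -> R) : Prop :=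
  bilin_on P p /\
  (forall x y, P x -> P y -> p x y = - p y x) /\
  (forall x y z, P x -> P y -> P z ->
      p x (p y z) + p y (p z x) + p z (p x y) = 0) /\
  (forall x y z, P x -> P y -> P z -> p x (y * z) = p x y * z + y * p x z).

Definition fps_poisson_on (R : comAlgType K) (P : R -> Prop) (p : nat -> R -> R -> R) : Prop :=
  (forall k, bilin_on P (p k)) /\
  (forall a b c : nat -> R, ser_in P a -> ser_in P b -> ser_in P c -> forall n,
     [/\ sbr p a b n = - sbr p b a n,
         sbr p a (sbr p b c) n + sbr p b (sbr p c a) n + sbr p c (sbr p a b) n = 0
       & sbr p a (smul b c) n = smul (sbr p a b) c n + smul b (sbr p a c) n]).

Definition der_on (R : comAlgType K) (P : R -> Prop) (D : R -> R) : Prop :=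
  (forall x, P x -> P (D x)) /\ lin_on P D /\
  (forall x y, P x -> P y -> D (x * y) = D x * y + x * D y).

Definition lam_der_on (R : comAlgType K) (P : R -> Prop) (X : nat -> R -> R) : Prop :=
  (forall x, P x -> X 0%N x = 0) /\ (forall k, der_on P (X k)).

Definition poisson_commutant (A B : comAlgType K) (sig0 : B -> B -> B) (phi0 : A -> B)
  : B -> Prop := fun b => forall a : A, sig0 (phi0 a) b = 0.

Definition series_commutant (A B : comAlgType K) (sigma : nat -> B -> B -> B)
  (Phi : nat -> A -> B) (c : nat -> B) : Prop :=
  forall (a : nat -> A) n, sbr sigma (sapply Phi a) c n = 0.

Definition fps_poisson_morph_on (A B : comAlgType K) (PA : A -> Prop)
  (pA : nat -> A -> A -> A) (sB : nat -> B -> B -> B) (F : nat -> A -> B) : Prop :=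
  (forall n, sapply F (@sone A) n = @sone B n) /\
  (forall a b : nat -> A, ser_in PA a -> ser_in PA b -> forall n,
     sapply F (smul a b) n = smul (sapply F a) (sapply F b) n /\
     sapply F (sbr pA a b) n = sbr sB (sapply F a) (sapply F b) n).

Definition everywhere (U : Type) : U -> Prop := fun _ => True.

End FPS.

(* Both exp(X') and exp(X'') are automorphisms of the algebra B[[λ]] that are
   the identity modulo λ: the Leibniz rule for the iterates of a λ-derivation,
   together with C(m,p)/m! = 1/(p!(m-p)!), makes an exponential multiplicative
   (this is where char K = 0 is used).  Hence T := exp(X'')^-1 ∘ exp(X'), computed
   degree by degree, is again such an automorphism.  T maps A'[[λ]] into itself:
   if T_k x ∈ A' for k < n, then exp(X') x - exp(X'')(T x truncated below n) lies
   in C and vanishes below degree n, so its degree-n coefficient T_n x commutes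
   with φ0(A) for σ0.  An automorphism of this kind is the exponential of a
   λ-derivation ξ preserving A': ξ_n := T_n - [exp(ξ_{<n})]_n is a derivation
   because T and exp(ξ_{<n}) are multiplicative and agree below degree n.  This
   is (i); for (ii) take η := ξ and cancel the injective exp(X'') in
   exp(X'')(exp ξ (π' a b)) = σ(exp X' a, exp X' b) = exp(X'')(π''(exp ξ a, exp ξ b)). *)

From HB Require Import structures.
From mathcomp Require Import all_boot all_order all_algebra.
From mathcomp Require Import zify ring.
Import GRing.Theory.
Local Open Scope ring_scope.

Set Implicit Arguments. Unset Strict Implicit. Unset Printing Implicit Defensive.

Section TriangularSums.
Variable V : zmodType.

Lemma sum_antidiagonals n (H : nat -> nat -> V) :
  \sum_(k < n.+1) \sum_(i < k.+1) H i (k - i)%N =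
  \sum_(i < n.+1) \sum_(j < (n - i).+1) H i j.
Proof.
elim: n => [|n IH]; first by rewrite !big_ord1.
rewrite big_ord_recr /= IH [RHS]big_ord_recr /= subnn big_ord1.
rewrite [X in _ = X + _](eq_bigr (fun i : 'I_n.+1 =>
   \sum_(j < (n - i).+1) H i j + H i (n.+1 - i)%N)); last first.
  by move=> i _; rewrite subSn ?big_ord_recr // -ltnS.
rewrite big_split /= -addrA; congr (_ + _).
by rewrite big_ord_recr /= subnn.
Qed.

Lemma exchange_triangle n (G : nat -> nat -> V) :
  \sum_(i < n.+1) \sum_(j < (n - i).+1) G i j =
  \sum_(j < n.+1) \sum_(i < (n - j).+1) G i j.
Proof.
rewrite -sum_antidiagonals -(sum_antidiagonals n (fun j i => G i j)).
apply: eq_bigr => k _; rewrite (reindex_inj rev_ord_inj) /=.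
by apply: eq_bigr => i _; rewrite subKn // -ltnS.
Qed.

Lemma sum_ord_widen0 k N (F : nat -> V) : (k <= N)%N ->
  (forall p, (k <= p < N)%N -> F p = 0) ->
  \sum_(p < k) F p = \sum_(p < N) F p.
Proof.
move=> kN F0; rewrite -!(big_mkord xpredT) (big_cat_nat (leq0n k) kN) /=.
by rewrite [X in _ = _ + X]big1_seq ?addr0 // => p /andP[_]; rewrite mem_index_iota => /F0.
Qed.

Lemma sum_pascal m (f : nat -> nat -> V) :
  \sum_(p < m.+1) (f p.+1 (m - p)%N + f p (m.+1 - p)%N) *+ 'C(m, p) =
  \sum_(p < m.+2) f p (m.+1 - p)%N *+ 'C(m.+1, p).
Proof.
rewrite [RHS]big_ord_recl /=.
under [X in _ = _ + X]eq_bigr => i _ do rewrite /bump /= add1n subSS binS mulrnDr.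
rewrite big_split /=.
under eq_bigr => i _ do rewrite mulrnDl.
rewrite big_split /= addrC [RHS]addrA; congr (_ + _).
rewrite [LHS]big_ord_recl /= !bin0 subn0; congr (_ + _).
rewrite [RHS]big_ord_recr /= bin_small // mulr0n addr0.
by apply: eq_bigr => i _; rewrite /bump /= add1n subSS.
Qed.

End TriangularSums.

Section SeriesRecursion.
Variables (T : Type) (t0 : T) (step : nat -> (nat -> T) -> T).

Fixpoint srec_prefix N : nat -> T :=
  if N is N'.+1 then fun k => if k == N' then step N' (srec_prefix N') else srec_prefix N' k
  else fun _ => t0.

Definition srec k : T := srec_prefix k.+1 k.

Lemma srecE k : srec k = step k (srec_prefix k).
Proof. by rewrite /srec /= eqxx. Qed.

Lemma srec_prefixE N k : srec_prefix N k = if (k < N)%N then srec k else t0.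
Proof.
elim: N => [//|N IH] /=; rewrite ltnS leq_eqVlt.
by case: eqP => [->|_]; [rewrite srecE | exact: IH].
Qed.

End SeriesRecursion.

Section SeriesAction.
Variable K : fieldType.
Implicit Types U V W : lmodType K.

Definition cst (V : zmodType) (x : V) : nat -> V := fun n => if n == 0%N then x else 0.

Lemma eq_sapply_le U V (F : nat -> U -> V) a b n :
  (forall k, (k <= n)%N -> a k = b k) -> sapply F a n = sapply F b n.
Proof. by move=> eq_ab; apply: eq_bigr => i _; rewrite eq_ab ?leq_subr. Qed.

Lemma sapply_cst U V (F : nat -> U -> V) x n :
  (forall i, F i 0 = 0) -> sapply F (cst x) n = F n x.
Proof.
move=> F0; rewrite /sapply big_ord_recr /= subnn big1 ?add0r // => i _.
by rewrite /cst subn_eq0 leqNgt ltn_ord F0.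
Qed.

Lemma sapply_sid U a n : sapply (@sid _ U) a n = a n.
Proof. by rewrite /sapply big_ord_recl subn0 big1 ?addr0. Qed.

Lemma sapply_sub_top U (F : nat -> U -> U) a b n : (forall x, F 0%N x = x) ->
  (forall k, (k < n)%N -> a k = b k) -> sapply F a n - sapply F b n = a n - b n.
Proof.
move=> F0 eq_ab; rewrite /sapply !big_ord_recl !subn0 !F0 opprD addrACA.
rewrite (eq_bigr (fun i : 'I_n => F (lift ord0 i) (b (n - lift ord0 i)%N))) ?subrr ?addr0 //.
by move=> i _; rewrite eq_ab // lift0; have := ltn_ord i; lia.
Qed.

Lemma sapply_inj U (F : nat -> U -> U) a b : (forall x, F 0%N x = x) ->
  (forall n, sapply F a n = sapply F b n) -> forall n, a n = b n.
Proof.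
move=> F0 eqF; elim/ltn_ind => n IH; apply/eqP.
by rewrite -subr_eq0 -(sapply_sub_top F0 IH) eqF subrr.
Qed.

Definition spre U (F : nat -> U -> U) (c : nat -> U) : nat -> U :=
  srec 0 (fun n b => c n - \sum_(i < n) F i.+1 (b (n - i.+1)%N)).

Lemma sapply_spre U (F : nat -> U -> U) c n :
  (forall x, F 0%N x = x) -> sapply F (spre F c) n = c n.
Proof.
move=> F0; rewrite /sapply big_ord_recl subn0 F0 {1}/spre srecE -[RHS]addr0 -addrA.
congr (_ + _); apply/eqP; rewrite addrC subr_eq0; apply/eqP; apply: eq_bigr => i _.
by rewrite srec_prefixE ifT //; have := ltn_ord i; lia.
Qed.

Section LinearFamily.
Variables (U V : lmodType K) (F : nat -> U -> V).
Hypothesis F_lin : forall k, linear (F k).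
HB.instance Definition _ k := GRing.isLinear.Build K U V *:%R (F k) (F_lin k).

Lemma sapply_lin c u v n :
  sapply F (fun k => c *: u k + v k) n = c *: sapply F u n + sapply F v n.
Proof. by rewrite /sapply scaler_sumr -big_split; apply: eq_bigr => i _; rewrite linearP. Qed.

Lemma sapply_sum (I : Type) (r : seq I) (P : pred I) (u : I -> nat -> U) n :
  sapply F (fun k => \sum_(i <- r | P i) u i k) n = \sum_(i <- r | P i) sapply F (u i) n.
Proof. by rewrite /sapply exchange_big; apply: eq_bigr => k _; rewrite linear_sum. Qed.

Lemma sapply_muln u m n : sapply F (fun k => u k *+ m) n = sapply F u n *+ m.
Proof. by rewrite /sapply -sumrMnl; apply: eq_bigr => i _; rewrite linearMn. Qed.

Lemma sapply_scomp W (G : nat -> W -> U) a n :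
  sapply (scomp F G) a n = sapply F (sapply G a) n.
Proof.
rewrite /sapply /scomp.
transitivity (\sum_(k < n.+1) \sum_(j < k.+1)
   (fun j l => F j (G l (a (n - j - l)%N))) j (k - j)%N).
  apply: eq_bigr => k _; apply: eq_bigr => j _ /=.
  by have := ltn_ord k; have := ltn_ord j => hj hk; congr (F _ (G _ (a _))); lia.
rewrite (sum_antidiagonals n (fun j l => F j (G l (a (n - j - l)%N)))).
by apply: eq_bigr => i _; rewrite linear_sum.
Qed.

End LinearFamily.

Lemma sapply_spow U (X : nat -> U -> U) m a n : (forall k, linear (X k)) ->
  sapply (spow X m) a n = iter m (sapply X) a n.
Proof.
move=> X_lin; elim: m n => [|m IH] n /=; first exact: sapply_sid.
by rewrite sapply_scomp //; apply: eq_sapply_le => k _; exact: IH.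
Qed.

End SeriesAction.

Lemma smul_cst (R : pzRingType) (x y : R) n : smul (cst x) (cst y) n = cst (x * y) n.
Proof.
rewrite /smul /cst; case: n => [|n]; first by rewrite big_ord1.
by rewrite big1 // => -[[|i] lt_i] _ /=; rewrite ?mulr0 ?mul0r.
Qed.

Section Exponential.
Variables (K : fieldType) (U : lmodType K).
Implicit Types (X Y Z : nat -> U -> U) (x : U).

Lemma sexp0 X x : sexp X 0 x = x.
Proof. by rewrite /sexp big_ord1 /= invr1 scale1r. Qed.

Lemma scomp_sid X n x : (forall k, X k 0 = 0) -> scomp X (@sid _ U) n x = X n x.
Proof.
move=> X0; rewrite /scomp big_ord_recr /= subnn big1 ?add0r // => i _.
by rewrite /sid subn_eq0 leqNgt ltn_ord X0.
Qed.

Lemma eq_spow_le Y Z n m x : (forall k x, (k <= n)%N -> Y k x = Z k x) ->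
  spow Y m n x = spow Z m n x.
Proof.
elim: m n => [//|m IH] n eqYZ /=; apply: eq_bigr => i _.
rewrite eqYZ; last by rewrite -ltnS.
congr (Z _ _); apply: IH => k y le_k.
by apply: eqYZ; apply: leq_trans le_k (leq_subr _ _).
Qed.

Lemma eq_sexp_le Y Z n x : (forall k x, (k <= n)%N -> Y k x = Z k x) ->
  sexp Y n x = sexp Z n x.
Proof. by move=> eqYZ; apply: eq_bigr => m _; rewrite (eq_spow_le _ _ eqYZ). Qed.

Section LinearGenerator.
Variable X : nat -> U -> U.
Hypothesis X_lin : forall k, linear (X k).
HB.instance Definition _ k := GRing.isLinear.Build K U U *:%R (X k) (X_lin k).

Lemma spow_lin m n : linear (spow X m n).
Proof.
elim: m n => [|m IH] n c x y /=; first by rewrite /sid; case: eqP; rewrite ?scaler0 ?addr0.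
rewrite /scomp scaler_sumr -big_split; apply: eq_bigr => k _.
by rewrite IH linearP.
Qed.

Lemma sexp_lin n : linear (sexp X n).
Proof.
move=> c x y; rewrite /sexp scaler_sumr -big_split; apply: eq_bigr => m _.
by rewrite spow_lin scalerDr !scalerA mulrC.
Qed.

Hypothesis X0 : forall x, X 0%N x = 0.

Lemma spow_vanish m n x : (n < m)%N -> spow X m n x = 0.
Proof.
elim: m n => [//|m IH] n lt_nm /=; rewrite /scomp big1 // => k _.
have [->|k_gt0] := posnP k; first exact: X0.
by rewrite IH ?linear0 //; have := ltn_ord k; lia.
Qed.

Lemma iter_sapply_vanish m a n : (n < m)%N -> iter m (sapply X) a n = 0.
Proof.
move=> lt_nm; rewrite -sapply_spow // /sapply big1 // => i _.
by rewrite spow_vanish //; apply: leq_ltn_trans lt_nm; rewrite -ltnS.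
Qed.

Lemma sapply_sexp_iter a n N : (n < N)%N ->
  sapply (sexp X) a n = \sum_(m < N) (m`!%:R)^-1 *: iter m (sapply X) a n.
Proof.
move=> lt_nN; under [RHS]eq_bigr => m _ do rewrite -sapply_spow // /sapply scaler_sumr.
rewrite exchange_big /=; apply: eq_bigr => i _.
apply: (sum_ord_widen0 (F := fun m => (m`!%:R)^-1 *: spow X m i (a (n - i)%N))).
  by apply: leq_trans lt_nN; rewrite ltnS -ltnS.
by move=> m /andP[le_im _]; rewrite spow_vanish ?scaler0.
Qed.

End LinearGenerator.

Section TopCoefficient.
Variables Y Z : nat -> U -> U.
Hypotheses (Y_lin : forall k, linear (Y k)) (Z_lin : forall k, linear (Z k)).
HB.instance Definition _ k := GRing.isLinear.Build K U U *:%R (Y k) (Y_lin k).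
HB.instance Definition _ k := GRing.isLinear.Build K U U *:%R (Z k) (Z_lin k).

(* Y_n occurs in degree n of Y^m only for m = 1; the other terms involve Y_k, k < n. *)
Lemma sexp_top n x : (0 < n)%N -> (forall x, Y 0%N x = 0) ->
  (forall k x, (k < n)%N -> Y k x = Z k x) -> (forall x, Z n x = 0) ->
  sexp Y n x = Y n x + sexp Z n x.
Proof.
move=> n_gt0 Y0 eqYZ Zn.
have Z0 x' : Z 0%N x' = 0 by rewrite -eqYZ.
have eq_spow m : scomp Y (spow Y m.+1) n x = scomp Z (spow Z m.+1) n x.
  apply: eq_bigr => i _.
  have [->|i_gt0] := posnP i; first by rewrite Y0 Z0.
  have := ltn_ord i; rewrite ltnS leq_eqVlt => /predU1P[->|lt_in].
    by rewrite subnn !spow_vanish // !linear0.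
  rewrite eqYZ //; congr (Z _ _); apply: eq_spow_le => k y le_k; apply: eqYZ; lia.
rewrite /sexp; case: n n_gt0 eqYZ Zn eq_spow => [//|n] _ _ Zn eq_spow.
rewrite !big_ord_recl !lift0 /= !scomp_sid => [|k|k]; [|exact: linear0..].
rewrite Zn /sid /= !scaler0 !add0r invr1 scale1r.
by congr (_ + _); apply: eq_bigr => i _; congr (_ *: _); apply: eq_spow.
Qed.

End TopCoefficient.

End Exponential.

Section LinearlyClosed.
Variables (K : fieldType) (U : lmodType K) (P : U -> Prop).
Hypotheses (P0 : P 0) (P_lin : forall (c : K) x y, P x -> P y -> P (c *: x + y)).

Lemma closed_sum (I : Type) (r : seq I) (Q : pred I) (F : I -> U) :
  (forall i, Q i -> P (F i)) -> P (\sum_(i <- r | Q i) F i).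
Proof.
move=> PF; elim: r => [|i r IH]; first by rewrite big_nil.
rewrite big_cons; case: ifP => // /PF Pi.
by rewrite -[F i]scale1r; apply: P_lin.
Qed.

Lemma closed_sub x y : P x -> P y -> P (x - y).
Proof. by move=> Px Py; rewrite addrC -scaleN1r; apply: P_lin. Qed.

Lemma sapply_closed (F : nat -> U -> U) a :
  (forall k x, P x -> P (F k x)) -> ser_in P a -> ser_in P (sapply F a).
Proof. by move=> PF Pa n; apply: closed_sum => i _; apply: PF. Qed.

Lemma sexp_closed (X : nat -> U -> U) n x :
  (forall k x, P x -> P (X k x)) -> P x -> P (sexp X n x).
Proof.
move=> PX Px; have Pspow m k : P (spow X m k x).
  elim: m k => [|m IH] k /=; first by rewrite /sid; case: eqP.
  by apply: closed_sum => i _; apply: PX.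
by apply: closed_sum => m _; rewrite -[_ *: _]addr0; apply: P_lin.
Qed.

End LinearlyClosed.

Section Derivations.
Variables (K : fieldType) (B : comAlgType K).

Definition derivation (D : B -> B) : Prop :=
  linear D /\ forall x y, D (x * y) = D x * y + x * D y.

Definition smultiplicative (T : nat -> B -> B) : Prop :=
  forall n x y, T n (x * y) = \sum_(i < n.+1) T i x * T (n - i)%N y.

Section DerivationFamily.
Variable X : nat -> B -> B.
Hypothesis X_der : forall k, derivation (X k).
Let X_lin k : linear (X k) := (X_der k).1.
HB.instance Definition _ k := GRing.isLinear.Build K B B *:%R (X k) (X_lin k).
HB.instance Definition _ k := GRing.isLinear.Build K B B *:%R (sexp X k) (sexp_lin X_lin k).

Lemma sapply_leibniz a b n :
  sapply X (smul a b) n = smul (sapply X a) b n + smul a (sapply X b) n.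
Proof.
rewrite {1}/sapply /smul.
under eq_bigr => i _ do rewrite linear_sum /=.
under eq_bigr => i _ do under eq_bigr => j _ do rewrite (X_der i).2.
under eq_bigr => i _ do rewrite big_split /=.
rewrite big_split /=; congr (_ + _); rewrite /sapply.
  under [RHS]eq_bigr => k _ do rewrite mulr_suml.
  rewrite -(sum_antidiagonals n (fun i j => X i (a j) * b (n - i - j)%N)).
  apply: eq_bigr => k _; apply: eq_bigr => j _ /=.
  by have := ltn_ord k; have := ltn_ord j => hj hk; congr (_ * b _); lia.
under [RHS]eq_bigr => k _ do rewrite mulr_sumr.
rewrite (exchange_triangle n (fun i j => a j * X i (b (n - i - j)%N))).
by apply: eq_bigr => k _; apply: eq_bigr => j _; rewrite subnAC.
Qed.

Lemma iter_leibniz m a b n : iter m (sapply X) (smul a b) n =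
  \sum_(p < m.+1) smul (iter p (sapply X) a) (iter (m - p) (sapply X) b) n *+ 'C(m, p).
Proof.
elim: m n => [|m IH] n; first by rewrite big_ord1 /= mulr1n.
rewrite iterS (eq_sapply_le _ (fun k _ => IH k)) (sapply_sum X_lin).
under eq_bigr => p _ do rewrite (sapply_muln X_lin) sapply_leibniz.
rewrite -(sum_pascal m (fun p q => smul (iter p (sapply X) a) (iter q (sapply X) b) n)).
by apply: eq_bigr => p _ /=; rewrite subSn // -ltnS.
Qed.

Section ExpMultiplicative.
Hypothesis K_char0 : [pchar K] =i pred0.
Hypothesis X0 : forall x, X 0%N x = 0.

Lemma inv_fact_mul_bin m p : (p <= m)%N ->
  (m`!%:R : K)^-1 * 'C(m, p)%:R = (p`!%:R)^-1 * ((m - p)`!%:R)^-1.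
Proof.
move=> le_pm; rewrite -(bin_fact le_pm) !natrM !invfM mulrAC mulVf ?mul1r //.
by move/pcharf0P: K_char0 => ->; rewrite -lt0n bin_gt0.
Qed.

Lemma sexp_smul a b n :
  sapply (sexp X) (smul a b) n = smul (sapply (sexp X) a) (sapply (sexp X) b) n.
Proof.
pose c m : K := (m`!%:R)^-1.
pose S p q := smul (iter p (sapply X) a) (iter q (sapply X) b) n.
have S0 p q : (n < p + q)%N -> S p q = 0.
  move=> lt_n; rewrite /S /smul big1 // => i _.
  have [lt_ip|le_pi] := ltnP i p; first by rewrite iter_sapply_vanish ?mul0r.
  by rewrite [X in _ * X]iter_sapply_vanish ?mulr0 //; have := ltn_ord i; lia.
(* Both sides are the sum of S p q / (p! q!) over p + q <= n. *)
transitivity (\sum_(p < n.+1) \sum_(q < (n - p).+1) (c p * c q) *: S p q).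
  rewrite (sapply_sexp_iter X_lin X0 _ (ltnSn n)).
  rewrite -(sum_antidiagonals n (fun p q => (c p * c q) *: S p q)).
  apply: eq_bigr => m _; rewrite iter_leibniz scaler_sumr; apply: eq_bigr => p _.
  by rewrite -scaler_nat scalerA inv_fact_mul_bin // -ltnS.
rewrite [RHS]/smul.
under [RHS]eq_bigr => i _ do rewrite (sapply_sexp_iter X_lin X0 a (ltn_ord i))
  (sapply_sexp_iter X_lin X0 b (leq_ltn_trans (leq_subr i n) (ltnSn n))) big_distrlr.
rewrite exchange_big; apply: eq_bigr => p _; rewrite exchange_big /=.
rewrite (@sum_ord_widen0 _ (n - p).+1 n.+1 (fun q => (c p * c q) *: S p q) (leq_subr p n)).
  apply: eq_bigr => q _; rewrite scaler_sumr; apply: eq_bigr => i _.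
  by rewrite -scalerAl -scalerAr scalerA.
by move=> q /andP[lt_q _]; rewrite S0 ?scaler0 //; lia.
Qed.

Lemma sexp_smultiplicative : smultiplicative (sexp X).
Proof.
have E0 i : sexp X i 0 = 0 by exact: linear0.
move=> n x y; rewrite -(sapply_cst _ _ E0) (eq_sapply_le _ (fun k _ => esym (smul_cst x y k))).
by rewrite sexp_smul; apply: eq_bigr => i _; rewrite !sapply_cst.
Qed.

End ExpMultiplicative.

End DerivationFamily.

Section MultiplicativeDifference.
Variables (S T : nat -> B -> B) (n : nat).
Hypotheses (S_lin : linear (S n)) (T_lin : linear (T n)).
Hypotheses (S_mul : smultiplicative S) (T_mul : smultiplicative T).
Hypotheses (S0 : forall x, S 0%N x = x) (T0 : forall x, T 0%N x = x).
Hypothesis eq_ST : forall k x, (0 < k < n)%N -> S k x = T k x.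
HB.instance Definition _ := GRing.isLinear.Build K B B *:%R (S n) S_lin.
HB.instance Definition _ := GRing.isLinear.Build K B B *:%R (T n) T_lin.

Lemma smultiplicative_sub_derivation : derivation (fun x => T n x - S n x).
Proof.
split=> [c x y|x y]; first by rewrite (linearP (T n)) (linearP (S n)) opprD addrACA scalerBr.
rewrite S_mul T_mul; case: n eq_ST => [|m] eq_ST'.
  by rewrite !big_ord1 !S0 !T0 !subrr mul0r mulr0 addr0.
rewrite !(big_ord_recl m.+1) !(big_ord_recr m) /= subn0 subnn !S0 !T0.
rewrite [X in _ - (_ + (X + _))](eq_bigr (fun i : 'I_m => T i.+1 x * T (m.+1 - i.+1)%N y)).
  by ring.
by move=> i _; rewrite !eq_ST' // /bump; have := ltn_ord i; lia.
Qed.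

End MultiplicativeDifference.

Lemma eq_derivation (D D' : B -> B) : (forall x, D x = D' x) ->
  derivation D -> derivation D'.
Proof.
move=> eqD [D_lin D_mul]; split=> [c x y|x y]; rewrite -!eqD; [exact: D_lin | exact: D_mul].
Qed.

Definition slog (T : nat -> B -> B) : nat -> B -> B :=
  srec (fun _ => 0) (fun n xi x => T n x - sexp xi n x).

Section Logarithm.
Hypothesis K_char0 : [pchar K] =i pred0.
Variable T : nat -> B -> B.
Hypotheses (T_lin : forall k, linear (T k)) (T0 : forall x, T 0%N x = x).
Hypothesis T_mul : smultiplicative T.

Let slog_upto := srec_prefix (fun _ : B => 0) (fun n xi x => T n x - sexp xi n x).

Let slog_uptoE k j x : slog_upto k j x = if (j < k)%N then slog T j x else 0.
Proof. by rewrite /slog_upto srec_prefixE; case: ifP. Qed.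

Let slogE k x : slog T k x = T k x - sexp (slog_upto k) k x.
Proof. by rewrite /slog srecE. Qed.

Lemma slog0 x : slog T 0 x = 0.
Proof. by rewrite slogE sexp0 T0 subrr. Qed.

Lemma slog_lin k : linear (slog T k).
Proof.
elim/ltn_ind: k => k IH c x y; rewrite !slogE (T_lin k).
have slog_upto_lin j : linear (slog_upto k j).
  by move=> c' x' y'; rewrite !slog_uptoE; case: ifP => [/IH -> //|_]; rewrite scaler0 addr0.
by rewrite (sexp_lin slog_upto_lin) opprD addrACA scalerBr.
Qed.

Lemma sexp_slog n x : sexp (slog T) n x = T n x.
Proof.
have [->|n_gt0] := posnP n; first by rewrite !sexp0 T0.
have slog_upto_lin j : linear (slog_upto n j).
  by move=> c y z; rewrite !slog_uptoE; case: ifP => _; rewrite ?slog_lin ?scaler0 ?addr0.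
rewrite (sexp_top slog_lin slog_upto_lin _ n_gt0 slog0) => [|k y lt_kn|y].
- by rewrite slogE subrK.
- by rewrite slog_uptoE lt_kn.
- by rewrite slog_uptoE ltnn.
Qed.

Lemma slog_derivation k : derivation (slog T k).
Proof.
elim/ltn_ind: k => k IH.
have slog_upto_der j : derivation (slog_upto k j).
  apply: (@eq_derivation (if (j < k)%N then slog T j else fun=> 0)) => [y|].
    by rewrite slog_uptoE; case: ifP.
  case: ifP => [/IH //|_]; split=> [c y z|y z]; by rewrite ?scaler0 ?mul0r ?mulr0 ?addr0.
apply: (eq_derivation (fun y => esym (slogE k y))).
apply: smultiplicative_sub_derivation => //.
- exact: sexp_lin (fun j => (slog_upto_der j).1) k.
- apply: (sexp_smultiplicative slog_upto_der K_char0) => y.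
  by rewrite slog_uptoE; case: ifP; rewrite ?slog0.
- by move=> y; rewrite sexp0.
move=> j y /andP[_ lt_jk]; rewrite -sexp_slog; apply: eq_sexp_le => i z le_ij.
by rewrite slog_uptoE ifT //; apply: leq_ltn_trans lt_jk.
Qed.

Section LogarithmClosed.
Variable P : B -> Prop.
Hypotheses (P0 : P 0) (P_lin : forall (c : K) x y, P x -> P y -> P (c *: x + y)).
Hypothesis T_closed : forall k x, P x -> P (T k x).

Lemma slog_closed k x : P x -> P (slog T k x).
Proof.
elim/ltn_ind: k x => k IH x Px; rewrite slogE; apply: closed_sub => //; first exact: T_closed.
by apply: sexp_closed => // j y Py; rewrite slog_uptoE; case: ifP => // /IH; apply.
Qed.

End LogarithmClosed.

End Logarithm.

End Derivations.

Definition squot (K : fieldType) (U : lmodType K) (F G : nat -> U -> U) : nat -> U -> U :=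
  fun n x => spre F (fun k => G k x) n.

Section Quotient.
Variables (K : fieldType) (U : lmodType K) (F G : nat -> U -> U).
Hypotheses (F_lin : forall k, linear (F k)) (F0 : forall x, F 0%N x = x).
Hypothesis G_lin : forall k, linear (G k).
HB.instance Definition _ k := GRing.isLinear.Build K U U *:%R (G k) (G_lin k).

Lemma sapply_squot_cst n x : sapply F (fun k => squot F G k x) n = G n x.
Proof. exact: sapply_spre. Qed.

Lemma squot0 x : squot F G 0 x = G 0%N x.
Proof. by rewrite -sapply_squot_cst /sapply big_ord1 F0. Qed.

Lemma squot_lin k : linear (squot F G k).
Proof.
move=> c x y; apply: (sapply_inj (b := fun k => c *: squot F G k x + squot F G k y) F0).
by move=> n; rewrite sapply_lin // !sapply_squot_cst G_lin.
Qed.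

Lemma sapply_squot a n : sapply F (sapply (squot F G) a) n = sapply G a n.
Proof. by rewrite -sapply_scomp //; apply: eq_bigr => i _; exact: sapply_squot_cst. Qed.

Section QuotientClosed.
Variables (P : U -> Prop) (Q : (nat -> U) -> Prop).
Hypotheses (P0 : P 0) (Q_sub : forall c d, Q c -> Q d -> Q (fun k => c k - d k)).
Hypothesis Q_lowest : forall c n, Q c -> (forall k, (k < n)%N -> c k = 0) -> P (c n).
Hypothesis QF : forall a, ser_in P a -> Q (sapply F a).
Hypothesis QG : forall a, ser_in P a -> Q (sapply G a).

Lemma squot_closed n x : P x -> P (squot F G n x).
Proof.
move=> Px; elim/ltn_ind: n => n IH.
pose t k := if (k < n)%N then squot F G k x else 0.
have Pt : ser_in P t by move=> k; rewrite /t; case: ifP => // /IH.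
have Pcx : ser_in P (cst x) by move=> k; rewrite /cst; case: ifP.
have G_cst k : sapply G (cst x) k = sapply F (fun j => squot F G j x) k.
  by rewrite sapply_cst ?sapply_squot_cst // => i; exact: linear0.
have := Q_lowest (n := n) (Q_sub (QG Pcx) (QF Pt)).
rewrite G_cst sapply_sub_top // => [|k lt_kn]; last by rewrite /t lt_kn.
rewrite /t ltnn subr0; apply=> k lt_kn; rewrite G_cst (eq_sapply_le _ (b := t)) ?subrr //.
by move=> j le_jk; rewrite /t ifT //; exact: leq_ltn_trans le_jk lt_kn.
Qed.

End QuotientClosed.

End Quotient.

Lemma squot_smultiplicative (K : fieldType) (B : comAlgType K) (F G : nat -> B -> B) :
  (forall x, F 0%N x = x) ->
  (forall a b n, sapply F (smul a b) n = smul (sapply F a) (sapply F b) n) ->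
  smultiplicative G -> smultiplicative (squot F G).
Proof.
move=> F0 F_mul G_mul n x y.
apply: (sapply_inj (a := fun k => squot F G k (x * y)) (b := smul _ _) F0) => {}n.
rewrite sapply_squot_cst // F_mul G_mul; apply: eq_bigr => i _.
by rewrite !sapply_squot_cst.
Qed.

Section Bracket.
Variables (K : fieldType) (U : lmodType K) (p : nat -> U -> U -> U).

Lemma eq_sbr_le a a' b b' n : (forall k, (k <= n)%N -> a k = a' k) ->
  (forall k, (k <= n)%N -> b k = b' k) -> sbr p a b n = sbr p a' b' n.
Proof.
move=> eq_a eq_b; apply: eq_bigr => i _; apply: eq_bigr => j _.
by have := ltn_ord i; have := ltn_ord j => lt_j lt_i; rewrite eq_a ?eq_b //; lia.
Qed.

Hypothesis p_lin : forall i z, linear (p i z).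
HB.instance Definition _ i z := GRing.isLinear.Build K U U *:%R (p i z) (p_lin i z).

Lemma sbr_subr a b c n : sbr p a (fun k => b k - c k) n = sbr p a b n - sbr p a c n.
Proof.
rewrite /sbr -sumrB; apply: eq_bigr => i _.
by rewrite -sumrB; apply: eq_bigr => j _; rewrite linearB.
Qed.

Lemma sbr_lowest a c n : (forall k, (k < n)%N -> c k = 0) -> sbr p a c n = p 0%N (a 0%N) (c n).
Proof.
move=> c_low; rewrite /sbr big_ord_recl [X in _ + X]big1 ?addr0 => [|i _]; last first.
  by rewrite big1 // => j _; rewrite c_low ?linear0 //; have := lift0 i; have := ltn_ord i; lia.
rewrite big_ord_recl [X in _ + X]big1 ?addr0 => [|j _]; first by rewrite !subn0.
by rewrite c_low ?linear0 //; have := lift0 j; have := ltn_ord j; lia.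
Qed.

End Bracket.

Section PredicateInterface.
Variable K : fieldType.

Lemma bilin_on_everywhere_r (U : lmodType K) (p : U -> U -> U) z :
  bilin_on (everywhere (U:=U)) p -> linear (p z).
Proof. by case=> _ [_ p_lin] c x y; exact: p_lin. Qed.

Lemma lam_der_on_everywhere (B : comAlgType K) (X : nat -> B -> B) :
  lam_der_on (everywhere (U:=B)) X -> (forall x, X 0%N x = 0) /\ (forall k, derivation (X k)).
Proof.
case=> X0 X_der; split=> [x|k]; first exact: X0.
by case: (X_der k) => _ [X_lin X_mul]; split=> [c x y|x y]; [exact: X_lin | exact: X_mul].
Qed.

Lemma lam_der_onP (B : comAlgType K) (P : B -> Prop) (X : nat -> B -> B) :
  (forall x, X 0%N x = 0) -> (forall k, derivation (X k)) ->
  (forall k x, P x -> P (X k x)) -> lam_der_on P X.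
Proof.
move=> X0 X_der X_closed; split=> // k; split; first exact: X_closed.
by case: (X_der k) => X_lin X_mul; split=> [c x y _ _|x y _ _]; [exact: X_lin | exact: X_mul].
Qed.

End PredicateInterface.

Section Commutant.
Variables (K : fieldType) (A B : comAlgType K) (sig0 : B -> B -> B) (phi0 : A -> B).
Hypothesis sig0_lin : forall z, linear (sig0 z).
HB.instance Definition _ z := GRing.isLinear.Build K B B *:%R (sig0 z) (sig0_lin z).
Local Notation P := (poisson_commutant sig0 phi0).

Lemma poisson_commutant0 : P 0.
Proof. by move=> a; exact: linear0. Qed.

Lemma poisson_commutant_lin (c : K) x y : P x -> P y -> P (c *: x + y).
Proof. by move=> Px Py a; rewrite linearP /= Px Py scaler0 addr0. Qed.

Variables (sigma : nat -> B -> B -> B) (Phi : nat -> A -> B).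
Hypothesis sigma_lin : forall i z, linear (sigma i z).
Hypotheses (sigma0 : forall x y, sigma 0%N x y = sig0 x y) (Phi0 : forall x, Phi 0%N x = phi0 x).
Local Notation C := (series_commutant sigma Phi).

Lemma series_commutant_sub c d : C c -> C d -> C (fun k => c k - d k).
Proof. by move=> Cc Cd a n; rewrite sbr_subr // Cc Cd subrr. Qed.

Lemma series_commutant_lowest c n : C c -> (forall k, (k < n)%N -> c k = 0) -> P (c n).
Proof.
move=> Cc c_low y; have := Cc (cst y) n.
by rewrite sbr_lowest // sigma0 /sapply big_ord1 Phi0.
Qed.

Hypothesis K_char0 : [pchar K] =i pred0.
Variables X' X'' : nat -> B -> B.
Hypotheses (X'0 : forall x, X' 0%N x = 0) (X'_der : forall k, derivation (X' k)).
Hypotheses (X''0 : forall x, X'' 0%N x = 0) (X''_der : forall k, derivation (X'' k)).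
Hypothesis X'_comm : forall a, ser_in P a -> C (sapply (sexp X') a).
Hypothesis X''_comm : forall a, ser_in P a -> C (sapply (sexp X'') a).

Lemma sexp_factor_commutant : exists xi, lam_der_on P xi /\
  forall a n, sapply (sexp X') a n = sapply (sexp X'') (sapply (sexp xi) a) n.
Proof.
have E'_lin := sexp_lin (fun k => (X'_der k).1).
have E''_lin := sexp_lin (fun k => (X''_der k).1).
pose T := squot (sexp X'') (sexp X').
have T_lin : forall k, linear (T k) := squot_lin E''_lin (sexp0 X'') E'_lin.
have T0 x : T 0%N x = x by rewrite /T (squot0 _ (sexp0 X'')) sexp0.
have T_mul : smultiplicative T.
  apply: squot_smultiplicative (sexp0 X'') _ (sexp_smultiplicative X'_der K_char0 X'0).
  exact: sexp_smul X''_der K_char0 X''0.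
have T_closed k x : P x -> P (T k x).
  apply: (squot_closed (sexp0 X'') E'_lin poisson_commutant0 series_commutant_sub _
    X''_comm X'_comm).
  exact: series_commutant_lowest.
exists (slog T); split.
  apply: lam_der_onP => [x|k|k x Px]; first exact: slog0.
    exact: (slog_derivation K_char0 T_lin T0 T_mul).
  exact: slog_closed poisson_commutant0 poisson_commutant_lin T_closed k x Px.
move=> a n; rewrite -(sapply_squot (sexp X') E''_lin (sexp0 X'')); apply: eq_sapply_le => k _.
by apply: eq_bigr => i _; rewrite sexp_slog.
Qed.

End Commutant.

Lemma sbr_morph_of_factor (K : fieldType) (B : comAlgType K) (P : B -> Prop)
    (pi' pi'' sigma : nat -> B -> B -> B) (E' E'' Xi : nat -> B -> B) :
  (forall x, E'' 0%N x = x) ->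
  (forall a n, sapply E' a n = sapply E'' (sapply Xi a) n) ->
  (forall a, ser_in P a -> ser_in P (sapply Xi a)) ->
  fps_poisson_morph_on P pi' sigma E' -> fps_poisson_morph_on P pi'' sigma E'' ->
  forall a b, ser_in P a -> ser_in P b ->
  forall n, sapply Xi (sbr pi' a b) n = sbr pi'' (sapply Xi a) (sapply Xi b) n.
Proof.
move=> E''0 factor Xi_closed [_ E'_morph] [_ E''_morph] a b Pa Pb.
apply: (sapply_inj E''0) => n.
rewrite -factor (E'_morph a b Pa Pb n).2 (E''_morph _ _ (Xi_closed a Pa) (Xi_closed b Pb) n).2.
by apply: eq_sbr_le => k _; exact: factor.
Qed.

Theorem proposition3p10
  (K : fieldType) (K_char0 : [pchar K] =i pred0)
  (A B : comAlgType K)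
  (pi0 : A -> A -> A) (sig0 : B -> B -> B)
  (Hpi0 : poisson_on (everywhere (U:=A)) pi0) (Hsig0 : poisson_on (everywhere (U:=B)) sig0)
  (phi0 : A -> B)
  (Hphi0_lin : lin_on (everywhere (U:=A)) phi0)
  (Hphi0_one : phi0 1 = 1)
  (Hphi0_mul : forall x y, phi0 (x * y) = phi0 x * phi0 y)
  (Hphi0_br : forall x y, phi0 (pi0 x y) = sig0 (phi0 x) (phi0 y))
  (pi : nat -> A -> A -> A) (sigma : nat -> B -> B -> B)
  (Hpi_0 : forall x y, pi 0%N x y = pi0 x y)
  (Hsigma_0 : forall x y, sigma 0%N x y = sig0 x y)
  (Hpi : fps_poisson_on (everywhere (U:=A)) pi)
  (Hsigma : fps_poisson_on (everywhere (U:=B)) sigma)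
  (Phi : nat -> A -> B)
  (HPhi_lin : forall k, lin_on (everywhere (U:=A)) (Phi k))
  (HPhi_0 : forall x, Phi 0%N x = phi0 x)
  (HPhi : fps_poisson_morph_on (everywhere (U:=A)) pi sigma Phi)
  (X' X'' : nat -> B -> B)
  (HX' : lam_der_on (everywhere (U:=B)) X')
  (HX'' : lam_der_on (everywhere (U:=B)) X'')
  (HX'C : forall a : nat -> B, ser_in (poisson_commutant sig0 phi0) a ->
            series_commutant sigma Phi (sapply (sexp X') a))
  (HX''C : forall a : nat -> B, ser_in (poisson_commutant sig0 phi0) a ->
            series_commutant sigma Phi (sapply (sexp X'') a)) :
  (* (i) *)
  (exists xi : nat -> B -> B,
     lam_der_on (poisson_commutant sig0 phi0) xi /\
     forall a : nat -> B, ser_in (poisson_commutant sig0 phi0) a ->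
       forall n, sapply (sexp X') a n = sapply (sexp X'') (sapply (sexp xi) a) n)
  /\
  (* (ii) *)
  (forall pi' pi'' : nat -> B -> B -> B,
     fps_poisson_on (poisson_commutant sig0 phi0) pi' ->
     fps_poisson_morph_on (poisson_commutant sig0 phi0) pi' sigma (sexp X') ->
     fps_poisson_on (poisson_commutant sig0 phi0) pi'' ->
     fps_poisson_morph_on (poisson_commutant sig0 phi0) pi'' sigma (sexp X'') ->
     exists eta : nat -> B -> B,
       lam_der_on (poisson_commutant sig0 phi0) eta /\
       forall a b : nat -> B,
         ser_in (poisson_commutant sig0 phi0) a ->
         ser_in (poisson_commutant sig0 phi0) b ->
         forall n, sapply (sexp eta) (sbr pi' a b) n
                   = sbr pi'' (sapply (sexp eta) a) (sapply (sexp eta) b) n).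
Proof.
have [X'0 X'_der] := lam_der_on_everywhere HX'.
have [X''0 X''_der] := lam_der_on_everywhere HX''.
have sig0_lin z := bilin_on_everywhere_r z Hsig0.1.
have sigma_lin i z := bilin_on_everywhere_r z (Hsigma.1 i).
have [xi [xi_der factor]] := sexp_factor_commutant sig0_lin sigma_lin Hsigma_0 HPhi_0
  K_char0 X'0 X'_der X''0 X''_der HX'C HX''C.
split; first by exists xi.
move=> pi' pi'' _ E'_morph _ E''_morph; exists xi; split=> //.
apply: sbr_morph_of_factor (sexp0 X'') factor _ E'_morph E''_morph => a Pa.
have P0 := poisson_commutant0 phi0 sig0_lin.
have P_lin := poisson_commutant_lin (phi0 := phi0) sig0_lin.
apply: (sapply_closed P0 P_lin) Pa => k x Px.
by apply: (sexp_closed P0 P_lin) Px => j y; exact: (xi_der.2 j).1.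
Qed.
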